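(* There is no constant $c$ such that every graph in the class $\mathcal{R}_3$ is $c$-colorable.
   Context: All graphs are finite and simple. For a word $w$ and distinct letters $x,y$ occurring in $w$, $x$ and $y$ alternate in $w$ if deleting all letters other than copies of $x$ and $y$ yields a word of the form $xyxy\cdots$ or $yxyx\cdots$ (of even or odd length). A graph $G=(V,E)$ is word-representable if there is a word $w$ over $V$ (each vertex occurring in $w$) such that for all distinct $x,y\in V$, $x$ and $y$ alternate in $w$ iff $(x,y)\in E$. A word is $k$-uniform if each letter occurs exactly $k$ times; $G$ is $k$-word-representable if some $k$-uniform word represents it; the representation number of a word-representable graph is the least such $k$. $\mathcal{R}_3$ is the class of word-representable graphs with representation number exactly $3$. *)

From mathcomp Require Import all_boot.
Set Implicit Arguments. Unset Strict Implicit. Unset Printing Implicit Defensive.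

Definition simple_graph (T : finType) (e : rel T) : Prop :=
  symmetric e /\ irreflexive e.

(* x and y alternate in w: the subword of copies of x and y has no two
   consecutive equal letters, i.e. it is of the form xyxy... or yxyx... *)
Definition alternate (T : finType) (w : seq T) (x y : T) : bool :=
  sorted (fun a b => a != b) [seq z <- w | (z == x) || (z == y)].

Definition represents (T : finType) (e : rel T) (w : seq T) : Prop :=
  (forall v : T, v \in w) /\
  (forall x y : T, x != y -> (alternate w x y <-> e x y)).

Definition word_representable (T : finType) (e : rel T) : Prop :=
  exists w : seq T, represents e w.

Definition k_uniform (T : finType) (k : nat) (w : seq T) : Prop :=
  forall v : T, count_mem v w = k.

Definition k_word_representable (T : finType) (e : rel T) (k : nat) : Prop :=
  exists w : seq T, k_uniform k w /\ represents e w.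

Definition representation_number_is (T : finType) (e : rel T) (k : nat) : Prop :=
  word_representable e /\ 0 < k /\ k_word_representable e k /\
  (forall j, 0 < j < k -> ~ k_word_representable e j).

Definition in_R3 (T : finType) (e : rel T) : Prop :=
  simple_graph e /\ representation_number_is e 3.

Definition colorable (T : finType) (e : rel T) (c : nat) : Prop :=
  exists f : T -> 'I_c, forall x y : T, e x y -> f x != f y.

From mathcomp Require Import all_boot.
Set Implicit Arguments. Unset Strict Implicit. Unset Printing Implicit Defensive.

(** The disjoint union of the triangular prism, whose representation number
    is 3, with the complete graph K_n lies in R_3 and is not (n-1)-colourable.
    Concatenating 3-uniform words for the two components gives a 3-uniform
    word for the union: a vertex of one component and a vertex of the other
    never alternate, because the first one already occurs twice in a row in
    their subword.  Conversely, erasing from a word for the union the letters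
    of K_n leaves a word for the prism, so the union is not 1- or
    2-word-representable either.  That the prism is neither is established
    by an exhaustive search over words, pruned by requiring every prefix to
    keep its neighbours alternating. *)

Section Words.
Variable T : finType.
Implicit Types (w : seq T) (x y : T).

Lemma k_uniform_mem k w v : 0 < k -> k_uniform k w -> v \in w.
Proof. by move=> k_gt0 unif; rewrite -has_pred1 has_count unif. Qed.

Lemma k_word_representableW (e : rel T) k :
  k_word_representable e k -> word_representable e.
Proof. by case=> w [_ rep]; exists w. Qed.

Lemma alternateC w x y : alternate w x y = alternate w y x.
Proof. by rewrite /alternate (eq_filter (fun z => orbC (z == x) (z == y))). Qed.

Lemma alternate_catl w1 w2 x y : alternate (w1 ++ w2) x y -> alternate w1 x y.
Proof. by rewrite /alternate filter_cat => /cat_sorted2[]. Qed.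

Lemma alternate_filter (p : pred T) w x y :
  p x -> p y -> alternate (filter p w) x y = alternate w x y.
Proof.
move=> px py; rewrite /alternate -filter_predI; congr sorted; apply: eq_filter => z /=.
by case: eqP => [->|_]; rewrite ?px //; case: eqP => [->|]; rewrite ?py.
Qed.

Lemma filter_pair_notin w x y :
  x \notin w -> y \notin w -> [seq z <- w | (z == x) || (z == y)] = [::].
Proof.
move=> xw yw; apply/eqP; rewrite -[_ == _]negbK -has_filter; apply/hasPn => z zw.
by apply/norP; split; [apply: contraNneq xw | apply: contraNneq yw] => <-.
Qed.

Lemma alternate_cat_notinr w1 w2 x y :
  x \notin w2 -> y \notin w2 -> alternate (w1 ++ w2) x y = alternate w1 x y.
Proof. by move=> xw yw; rewrite /alternate filter_cat (filter_pair_notin xw yw) cats0. Qed.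

Lemma alternate_cat_notinl w1 w2 x y :
  x \notin w1 -> y \notin w1 -> alternate (w1 ++ w2) x y = alternate w2 x y.
Proof. by move=> xw yw; rewrite /alternate filter_cat (filter_pair_notin xw yw). Qed.

Lemma alternate_repeat_cat w1 w2 x y :
  y \notin w1 -> 1 < count_mem x w1 -> ~~ alternate (w1 ++ w2) x y.
Proof.
move=> yw1 x_twice; rewrite /alternate filter_cat (@eq_in_filter _ _ (pred1 x)).
  have /all_pred1P -> := filter_all (pred1 x) w1; rewrite size_filter.
  by case: (count_mem x w1) x_twice => [|[|c]] //= _; rewrite eqxx.
by move=> z zw1 /=; rewrite (_ : z == y = false) ?orbF //; apply: contraNF yw1 => /eqP <-.
Qed.

Lemma sorted_neq_flatten_pair (a b : T) k :
  a != b -> sorted (fun u v => u != v) (flatten (nseq k [:: a; b])).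
Proof.
move=> ab; have path_b n : path (fun u v => u != v) b (flatten (nseq n [:: a; b])).
  by elim: n => //= n ->; rewrite eq_sym ab.
by case: k => //= k; rewrite ab path_b.
Qed.

End Words.

Section InjectiveMap.
Variables (S T : finType) (f : S -> T).
Hypothesis inj_f : injective f.

Lemma count_mem_map (w : seq S) x : count_mem (f x) (map f w) = count_mem x w.
Proof. by rewrite count_map; apply: eq_count => z /=; rewrite inj_eq. Qed.

Lemma alternate_map (w : seq S) x y :
  alternate (map f w) (f x) (f y) = alternate w x y.
Proof.
rewrite /alternate filter_map sorted_map.
rewrite (@eq_filter _ _ (fun z => (z == x) || (z == y))) => [|z /=]; last by rewrite !inj_eq.
by apply: eq_sorted => u v /=; rewrite inj_eq.
Qed.

End InjectiveMap.

Section InducedWord.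
Variables (S T : finType) (f : S -> T) (g : T -> option S).
Hypotheses (fK : pcancel f g) (gK : ocancel g f).

Lemma k_word_representable_relpre (e : rel T) k :
  k_word_representable e k -> k_word_representable (relpre f e) k.
Proof.
case=> w [unif [mem_w rep]]; exists (pmap g w).
have inj_f := pcan_inj fK.
have map_pmap : map f (pmap g w) = filter g w := pmap_filter gK w.
have count_pmap a : count_mem a (pmap g w) = count_mem (f a) w.
  rewrite -(count_mem_map inj_f) map_pmap count_filter.
  by apply: eq_count => z /=; case: eqP => // ->; rewrite fK.
split; first by move=> a; rewrite count_pmap.
split=> [v | x y xy]; first by rewrite mem_pmap -fK map_f.
rewrite -(alternate_map inj_f) map_pmap alternate_filter ?fK //.
by apply: rep; rewrite inj_eq.
Qed.

End InducedWord.

Section DisjointUnion.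
Variables (T1 T2 : finType) (e1 : rel T1) (e2 : rel T2).

Definition disjoint_union : rel (T1 + T2) := fun x y =>
  match x, y with
  | inl a, inl b => e1 a b
  | inr a, inr b => e2 a b
  | _, _ => false
  end.

Lemma simple_graph_disjoint_union :
  simple_graph e1 -> simple_graph e2 -> simple_graph disjoint_union.
Proof.
move=> [sym1 irr1] [sym2 irr2]; split; first by case=> a [] b /=.
by case=> a /=.
Qed.

Lemma disjoint_union_k_word_representable k :
  1 < k -> k_word_representable e1 k -> k_word_representable e2 k ->
  k_word_representable disjoint_union k.
Proof.
move=> k_gt1 [w1 [unif1 [_ rep1]]] [w2 [unif2 [_ rep2]]].
have inl_notin (a : T1) : inl a \notin map inr w2 by apply/mapP=> -[].
have inr_notin (b : T2) : inr b \notin map inl w1 by apply/mapP=> -[].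
have unif : k_uniform k (map inl w1 ++ map inr w2).
  case=> a; rewrite count_cat.
    by rewrite (count_memPn (inl_notin a)) addn0 (count_mem_map inl_inj) unif1.
  by rewrite (count_memPn (inr_notin a)) (count_mem_map inr_inj) unif2.
exists (map inl w1 ++ map inr w2); split=> //.
split=> [|[a|a] [b|b] ab]; first by move=> v; apply: k_uniform_mem (ltnW k_gt1) unif.
- by rewrite alternate_cat_notinr ?inl_notin // (alternate_map inl_inj); apply: rep1.
- split=> //; apply: contraTT => _; apply: alternate_repeat_cat; rewrite ?inr_notin //.
  by rewrite (count_mem_map inl_inj) unif1.
- rewrite alternateC; split=> //; apply: contraTT => _; apply: alternate_repeat_cat; rewrite ?inr_notin //.
  by rewrite (count_mem_map inl_inj) unif1.
- by rewrite alternate_cat_notinl ?inr_notin // (alternate_map inr_inj); apply: rep2.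
Qed.

Lemma representation_number_disjoint_union k :
  1 < k -> representation_number_is e1 k -> k_word_representable e2 k ->
  representation_number_is disjoint_union k.
Proof.
move=> k_gt1 [_ [k_gt0 [rep1 min1]]] rep2.
have rep := disjoint_union_k_word_representable k_gt1 rep1 rep2.
split; first exact: k_word_representableW rep.
do 2!split=> //; move=> j jk rep_j; apply: (min1 j jk).
pose left_part (z : T1 + T2) := if z is inl a then Some a else None.
have inlK : pcancel inl left_part by [].
have left_partK : ocancel left_part inl by case.
exact: k_word_representable_relpre inlK left_partK _ _ rep_j.
Qed.

Lemma colorable_disjoint_unionr c : colorable disjoint_union c -> colorable e2 c.
Proof. by case=> f fP; exists (f \o inr) => x y; apply: (fP (inr x) (inr y)). Qed.

End DisjointUnion.

Section CompleteGraph.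
Variable T : finType.

Definition complete_graph : rel T := fun x y => x != y.

Lemma simple_graph_complete_graph : simple_graph complete_graph.
Proof. by split=> [x y | x]; rewrite /complete_graph ?eqxx // eq_sym. Qed.

Lemma complete_graph_k_word_representable k :
  0 < k -> k_word_representable complete_graph k.
Proof.
move=> k_gt0; exists (flatten (nseq k (enum T))).
have unif : k_uniform k (flatten (nseq k (enum T))).
  move=> v; rewrite count_flatten map_nseq sumn_nseq.
  by rewrite count_uniq_mem ?enum_uniq ?mem_enum ?mul1n.
split=> //; split=> [v | x y xy]; first exact: k_uniform_mem k_gt0 unif.
rewrite /alternate filter_flatten map_nseq.
have [a [b [ab ->]]] : exists a b, a != b /\
    [seq z <- enum T | (z == x) || (z == y)] = [:: a; b].
  have xy_perm : perm_eq [seq z <- enum T | (z == x) || (z == y)] [:: x; y].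
    apply: uniq_perm; first exact/filter_uniq/enum_uniq.
      by rewrite /= inE xy.
    by move=> z; rewrite mem_filter mem_enum andbT !inE.
  move: (filter_uniq (fun z => (z == x) || (z == y)) (enum_uniq T)) (perm_size xy_perm).
  by case: [seq _ <- _ | _] => [|a [|b []]] //= /andP[]; rewrite inE => ab _ _; exists a, b.
by split=> // _; apply: sorted_neq_flatten_pair.
Qed.

Lemma colorable_complete_graph c : colorable complete_graph c -> #|T| <= c.
Proof.
case=> f fP; rewrite -[c]card_ord; apply: leq_card => x y /eqP.
by apply: contraTeq; apply: fP.
Qed.

End CompleteGraph.

Section WordSearch.
Variables (T : finType) (vs : seq T) (eqb e : rel T) (k : nat).
Hypotheses (mem_vs : forall v, v \in vs) (eqbE : eqb =2 eq_op).

Definition count_eqb a (w : seq T) := count (eqb^~ a) w.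

Definition alternate_eqb (w : seq T) a b :=
  sorted (fun x y => ~~ eqb x y) [seq z <- w | eqb z a || eqb z b].

Lemma count_eqbE a w : count_eqb a w = count_mem a w.
Proof. by apply: eq_count => z; rewrite /= eqbE. Qed.

Lemma alternate_eqbE w a b : alternate_eqb w a b = alternate w a b.
Proof.
rewrite /alternate_eqb /alternate (eq_filter (a2 := fun z => (z == a) || (z == b))).
  by apply: eq_sorted => x y; rewrite eqbE.
by move=> z; rewrite !eqbE.
Qed.

Definition uniformly_represents (w : seq T) :=
  all (fun a => count_eqb a w == k) vs &&
  all (fun a => all (fun b => ~~ eqb a b ==> (alternate_eqb w a b == e a b)) vs) vs.

Definition admissible_step (q : seq T) a :=
  (count_eqb a q <= k) &&
  all (fun b => ~~ eqb a b && e a b ==> alternate_eqb q a b) vs.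

(* [if] rather than [&&] keeps the pruning lazy under [vm_compute]. *)
Fixpoint search (n : nat) (pre : seq T) : bool :=
  if n is n'.+1 then
    has (fun a => if admissible_step (rcons pre a) a then search n' (rcons pre a)
                  else false) vs
  else uniformly_represents pre.

Lemma uniformly_represents_word w :
  k_uniform k w -> represents e w -> uniformly_represents w.
Proof.
move=> unif [_ rep]; apply/andP; split; apply/allP=> a _.
  by rewrite count_eqbE unif.
apply/allP=> b _; apply/implyP; rewrite eqbE alternate_eqbE => ab.
by case: (rep a b ab) => ab1 ab2; apply/eqP; apply/idP/idP.
Qed.

Lemma uniformly_represents_k_word_representable w :
  0 < k -> uniformly_represents w -> k_word_representable e k.
Proof.
move=> k_gt0 /andP[/allP cnt /allP alt]; exists w.
have unif : k_uniform k w by move=> v; rewrite -count_eqbE; apply/eqP/cnt.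
split=> //; split=> [v | x y xy]; first exact: k_uniform_mem k_gt0 unif.
have /allP/(_ y (mem_vs y)) := alt x (mem_vs x).
by rewrite eqbE xy alternate_eqbE => /eqP ->.
Qed.

Lemma admissible_step_prefix q r a :
  uniformly_represents (q ++ r) -> admissible_step q a.
Proof.
case/andP=> /allP cnt /allP alt; apply/andP; split.
  by rewrite -(eqP (cnt a (mem_vs a))) !count_eqbE count_cat leq_addr.
apply/allP=> b _; apply/implyP=> /andP[ab eab].
have /allP/(_ b (mem_vs b)) := alt a (mem_vs a).
by rewrite ab eab !alternate_eqbE => /eqP/alternate_catl.
Qed.

Lemma search_complete n pre s :
  size s = n -> uniformly_represents (pre ++ s) -> search n pre.
Proof.
elim: n pre s => [|n IH] pre [|a s] //=; first by rewrite cats0.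
move=> [size_s] rep; apply/hasP; exists a; first exact: mem_vs.
rewrite -cat_rcons in rep; rewrite (admissible_step_prefix a rep).
exact: IH size_s rep.
Qed.

Lemma size_k_uniform (w : seq T) : k_uniform k w -> size w = #|T| * k.
Proof.
move=> unif; have -> : size w = \sum_(a : T) count_mem a w.
  elim: w {unif} => [|x w IH]; first by rewrite big1.
  rewrite /= IH big_split /= -add1n; congr (_ + _).
  by rewrite (bigD1 x) //= eqxx big1 // => a; rewrite eq_sym => /negbTE ->.
by rewrite (eq_bigr (fun _ => k)) ?sum_nat_const.
Qed.

Lemma k_word_representable_search :
  k_word_representable e k -> search (#|T| * k) [::].
Proof.
case=> w [unif rep]; apply: (@search_complete _ [::] w).
  exact: size_k_uniform.
exact: uniformly_represents_word.
Qed.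

End WordSearch.

(* Two triangles, {0, 1, 2} and {3, 4, 5}, with i joined to i + 3. *)
Definition prism : rel 'I_6 := fun a b =>
  (a != b) && (((a < 3) == (b < 3)) || (a %% 3 == b %% 3)).

Lemma simple_graph_prism : simple_graph prism.
Proof.
split=> [a b | a]; last by rewrite /prism eqxx.
by rewrite /prism eq_sym (eq_sym (a < 3)) (eq_sym (a %% 3)).
Qed.

(* The generic [==] and [enum] of ['I_6] do not reduce well under [vm_compute],
   so the search runs with [eqn] and an explicit vertex list. *)
Definition eq_ord6 : rel 'I_6 := fun a b => eqn a b.

Lemma eq_ord6E : eq_ord6 =2 eq_op.
Proof. by []. Qed.

Definition ord6 (i : nat) : 'I_6 := Ordinal (ltn_pmod i (isT : 0 < 6)).

Definition prism_vertices : seq 'I_6 := map ord6 (iota 0 6).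

Lemma mem_prism_vertices v : v \in prism_vertices.
Proof.
apply/mapP; exists (val v); first by rewrite mem_iota add0n ltn_ord.
by apply: val_inj; rewrite /= modn_small.
Qed.

Definition prism_word : seq 'I_6 :=
  map ord6 [:: 0; 1; 2; 3; 0; 4; 1; 5; 2; 3; 0; 4; 5; 3; 1; 4; 2; 5].

Lemma prism_word_represents :
  uniformly_represents prism_vertices eq_ord6 prism 3 prism_word.
Proof. by vm_compute. Qed.

Lemma prism_search_short_fails :
  ~~ search prism_vertices eq_ord6 prism 1 (6 * 1) [::] &&
  ~~ search prism_vertices eq_ord6 prism 2 (6 * 2) [::].
Proof. vm_compute; reflexivity. Qed.

Lemma prism_representation_number : representation_number_is prism 3.
Proof.
have rep3 := uniformly_represents_k_word_representable
  mem_prism_vertices eq_ord6E (isT : 0 < 3) prism_word_represents.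
split; first exact: k_word_representableW rep3.
do 2!split=> //; move=> j j_range /(k_word_representable_search mem_prism_vertices eq_ord6E).
have [-> | ->] : j = 1 \/ j = 2 by case: j j_range => [|[|[|j]]] //; [left | right].
all: rewrite card_ord; apply/negP; by case/andP: prism_search_short_fails.
Qed.

Lemma in_R3_prism_complete n :
  in_R3 (disjoint_union prism (@complete_graph 'I_n)).
Proof.
split.
  exact: simple_graph_disjoint_union simple_graph_prism (simple_graph_complete_graph _).
apply: representation_number_disjoint_union prism_representation_number _ => //.
exact: complete_graph_k_word_representable.
Qed.

Theorem theorem18 :
  ~ (exists c : nat, forall (T : finType) (e : rel T), in_R3 e -> colorable e c).
Proof.
case=> c colorable_R3.
have := colorable_disjoint_unionr (colorable_R3 _ _ (in_R3_prism_complete c.+1)).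
by move/colorable_complete_graph; rewrite card_ord ltnn.
Qed.
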